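(* Let $m\ge0$ be an integer, $w_0\in L_{2m}$ the basis vector of weight $0$, $\mu$ generic, and $\Phi^{w_0,\mathrm{trig}}_\mu$ as in the context. If $|q^{-2\lambda}|$ is sufficiently small, the trace $\mathrm{Tr}|_{M_\mu}(\Phi^{w_0,\mathrm{trig}}_\mu q^{2\lambda\rho})$ converges and \[ \mathrm{Tr}|_{M_\mu}(\Phi^{w_0,\mathrm{trig}}_\mu q^{2\lambda\rho})=q^{\lambda\mu}\sum_{l=0}^m(-1)^lq^{-2\lambda l}q^{-l(l-1)/2}\frac{[m]_l[m+l]_l}{[l]_l}\frac{(q-q^{-1})^l}{\prod_{i=0}^{l-1}(1-q^{-2\mu+2i})\prod_{i=0}^l(1-q^{-2\lambda-2i})}. \]
   Context: $q\in\mathbb{C}^\times$ transcendental over $\mathbb{Q}$, $q^x:=e^{x\log q}$, $[n]=\frac{q^n-q^{-n}}{q-q^{-1}}$, $[n]_l=[n][n-1]\cdots[n-l+1]$. $U_q(\mathfrak{sl}_2)$ is generated by $e,f,q^h$ with $q^heq^{-h}=q^2e$, $q^hfq^{-h}=q^{-2}f$, $[e,f]=\frac{q^h-q^{-h}}{q-q^{-1}}$, coproduct $\Delta(e)=e\otimes1+q^h\otimes e$, $\Delta(f)=f\otimes q^{-h}+1\otimes f$, $\Delta(q^h)=q^h\otimes q^h$. $M_\mu$ is the Verma module with basis $f^jv_\mu$ ($j\ge0$): $ef^jv_\mu=[\mu-j+1][j]f^{j-1}v_\mu$, $f\cdot f^jv_\mu=f^{j+1}v_\mu$, $q^hf^jv_\mu=q^{\mu-2j}f^jv_\mu$.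 $L_{2m}$ is the irreducible module with basis $w_{2j}$, $-m\le j\le m$: $ew_{2j}=[m-j]w_{2j+2}$, $fw_{2j}=[m+j]w_{2j-2}$, $q^hw_{2j}=q^{2j}w_{2j}$. $\Phi^{w_0,\mathrm{trig}}_\mu:M_\mu\to M_\mu\widehat\otimes L_{2m}$ is the unique intertwiner with $v_\mu\mapsto v_\mu\otimes w_0+$ terms of lower weight in the first factor. $q^{2\lambda\rho}$ acts on $f^jv_\mu$ by $q^{\lambda(\mu-2j)}$; the trace is valued in $L_{2m}[0]=\mathbb{C}w_0\cong\mathbb{C}$. *)

From Stdlib Require Import Reals QArith Qreals ZArith List.
From Coquelicot Require Import Coquelicot.

Open Scope C_scope.

Definition cexp (z : C) : C :=
  (exp (fst z) * cos (snd z), exp (fst z) * sin (snd z))%R.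

Fixpoint Qpoly_eval (p : list Q) (z : C) : C :=
  match p with
  | nil => 0
  | c :: p' => RtoC (Q2R c) + z * Qpoly_eval p' z
  end.

Definition transcendental (z : C) : Prop :=
  forall p : list Q, (exists c, In c p /\ ~ (c == 0)%Q) -> Qpoly_eval p z <> 0.

(** Throughout, [L] is a fixed logarithm of q, i.e. q = cexp L, and
    q^x := e^{x log q} = cexp (x * L). *)
Definition qpow (L x : C) : C := cexp (x * L).

Definition qnum (L x : C) : C :=
  (qpow L x - qpow L (- x)) / (qpow L 1 - qpow L (-1)).

Fixpoint qfall (L : C) (n l : nat) : C :=
  match l with
  | O => 1
  | S l' => qnum L (INR n - INR l') * qfall L n l'
  end.

Fixpoint cprod (f : nat -> C) (n : nat) : C :=
  match n with
  | O => 1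
  | S n' => cprod f n' * f n'
  end.

(** Elements of the (completed) tensor product M_mu ⊗̂ L_{2m} are described by
    their coefficients: X i k = coefficient of f^i v_mu ⊗ w_{2k}
    (i >= 0, k an integer, only -m <= k <= m is meaningful). *)
Definition tensor := nat -> Z -> C.

(** Action of Δ(e) = e ⊗ 1 + q^h ⊗ e on coefficients, using
    e f^{i+1} v = [mu - i][i+1] f^i v  and  e w_{2k-2} = [m-k+1] w_{2k}. *)
Definition tensor_e (L mu : C) (m : nat) (X : tensor) : tensor :=
  fun i k =>
    qnum L (mu - INR i) * qnum L (INR i + 1) * X (S i) k
    + qpow L (mu - 2 * INR i) * qnum L (INR m - (IZR k - 1)) * X i (k - 1)%Z.

(** Action of Δ(f) = f ⊗ q^{-h} + 1 ⊗ f on coefficients, using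
    f (f^{i-1} v) = f^i v, q^{-h} w_{2k} = q^{-2k} w_{2k},
    f w_{2k+2} = [m+k+1] w_{2k}. *)
Definition tensor_f (L : C) (m : nat) (X : tensor) : tensor :=
  fun i k =>
    match i with
    | O => 0
    | S i' => qpow L (- 2 * IZR k) * X i' k
    end
    + qnum L (INR m + IZR k + 1) * X i (k + 1)%Z.

(** Action of Δ(q^h) = q^h ⊗ q^h on coefficients. *)
Definition tensor_qh (L mu : C) (X : tensor) : tensor :=
  fun i k => qpow L (mu - 2 * INR i + 2 * IZR k) * X i k.

(** A linear map Phi : M_mu -> M_mu ⊗̂ L_{2m}, given by
    Phi j = image of the basis vector f^j v_mu. *)
Definition vmap := nat -> tensor.

Definition is_intertwiner (L mu : C) (m : nat) (Phi : vmap) : Prop :=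
  (* values lie in M_mu ⊗̂ L_{2m}: only weights -2m..2m of L_{2m} occur *)
  (forall j i k, (k < - Z.of_nat m \/ Z.of_nat m < k)%Z -> Phi j i k = 0)
  (* Phi (q^h x) = Δ(q^h) Phi(x) *)
  /\ (forall j i k, tensor_qh L mu (Phi j) i k = qpow L (mu - 2 * INR j) * Phi j i k)
  (* Phi (e x) = Δ(e) Phi(x), with e f^j v = [mu-j+1][j] f^{j-1} v *)
  /\ (forall j i k, tensor_e L mu m (Phi j) i k =
        match j with
        | O => 0
        | S j' => qnum L (mu - INR j') * qnum L (INR j' + 1) * Phi j' i k
        end)
  (* Phi (f x) = Δ(f) Phi(x) *)
  /\ (forall j i k, tensor_f L m (Phi j) i k = Phi (S j) i k).

(** Phi^{w0,trig}_mu: the intertwiner with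
    v_mu |-> v_mu ⊗ w_0 + (terms of lower weight in the first factor). *)
Definition is_Phi_w0_trig (L mu : C) (m : nat) (Phi : vmap) : Prop :=
  is_intertwiner L mu m Phi /\ Phi O O 0%Z = 1 /\
  (forall k, k <> 0%Z -> Phi O O k = 0).

(** j-th term of Tr|_{M_mu}(Phi q^{2 lambda rho}) (the w_0-coefficient,
    the trace being valued in L_{2m}[0] = C w_0):
    q^{lambda (mu - 2 j)} * <f^j v_mu ⊗ w_0 coefficient of Phi(f^j v_mu)>. *)
Definition trace_term (L mu lam : C) (Phi : vmap) (j : nat) : C :=
  qpow L (lam * (mu - 2 * INR j)) * Phi j j 0%Z.

Definition trace_formula (L mu lam : C) (m : nat) : C :=
  qpow L (lam * mu) *
  sum_n (fun l =>
     (-1) ^ l * qpow L (- 2 * lam * INR l)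
     * qpow L (- (INR l * (INR l - 1) / 2)%R)
     * (qfall L m l * qfall L (m + l) l / qfall L l l)
     * ((qpow L 1 - qpow L (-1)) ^ l
        / (cprod (fun i => 1 - qpow L (- 2 * mu + 2 * INR i)) l
           * cprod (fun i => 1 - qpow L (- 2 * lam - 2 * INR i)) (S l))))
   m.

From Stdlib Require Import Reals QArith Qreals ZArith List Lia Lra Classical.
From Coquelicot Require Import Coquelicot.
Open Scope C_scope.

(* The intertwining relation for e, applied to v_mu, determines
   Phi(v_mu) = sum_l c_l f^l v_mu ⊗ w_{2l} through a first-order recursion in l,
   with c_l = 0 for l > m.  The relation for f then expresses the coefficient
   Q_{j,k} of f^{j+k} v_mu ⊗ w_{2k} in Phi(f^j v_mu) by the two-term recursion
   Q_{j+1,k} = q^{-2k} Q_{j,k} + [m+k+1] Q_{j,k+1},  Q_{0,k} = c_k,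
   and the trace is q^{lambda mu} sum_j x^j Q_{j,0} with x = q^{-2 lambda}.
   For |x| small these generating series S_k = sum_j x^j Q_{j,k} converge
   (|Q_{j,k}| grows at most geometrically in j) and satisfy
   (1 - x q^{-2k}) S_k = c_k + x [m+k+1] S_{k+1}; since S_k = 0 for k > m,
   solving downwards from k = m yields S_0 as the finite sum of the formula. *)

Lemma cexp_add a b : cexp (a + b) = cexp a * cexp b.
Proof.
  destruct a as [a1 a2], b as [b1 b2]. unfold cexp. simpl.
  rewrite exp_plus, cos_plus, sin_plus.
  apply injective_projections; simpl; ring.
Qed.

Lemma qpow_add L a b : qpow L (a + b) = qpow L a * qpow L b.
Proof. unfold qpow. rewrite <- cexp_add. f_equal. ring. Qed.

Lemma qpow_0 L : qpow L 0 = 1.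
Proof.
  unfold qpow, cexp. simpl.
  replace (0 * fst L - 0 * snd L)%R with 0%R by ring.
  replace (0 * snd L + 0 * fst L)%R with 0%R by ring.
  rewrite exp_0, cos_0, sin_0. apply injective_projections; simpl; ring.
Qed.

Lemma qpow_mult_nat L n z : qpow L (INR n * z) = qpow L z ^ n.
Proof.
  induction n as [|n IH]; simpl Cpow.
  - rewrite <- (qpow_0 L). f_equal. simpl. ring.
  - rewrite <- IH, <- qpow_add. f_equal. rewrite S_INR, RtoC_plus. ring.
Qed.

(* Unconditional, because Coquelicot's inverse of 0 is 0. *)
Lemma Cinv_mult_distr (a b : C) : / (a * b) = / a * / b.
Proof.
  assert (Cinv_0 : / (0 : C) = 0).
  { unfold Cinv. simpl. apply injective_projections; simpl; unfold Rdiv; ring. }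
  destruct (classic (a = 0)) as [->|Ha]; [rewrite Cmult_0_l, Cinv_0; ring|].
  destruct (classic (b = 0)) as [->|Hb]; [rewrite Cmult_0_r, Cinv_0; ring|].
  field. auto.
Qed.

Lemma C1_neq_0 : (1 : C) <> 0.
Proof. intro H. apply (f_equal fst) in H. simpl in H. lra. Qed.

Lemma Cminus_eq_0 (a b : C) : a - b = 0 -> a = b.
Proof. intro H. replace a with (a - b + b) by ring. rewrite H. ring. Qed.

Lemma is_series_C_unique (a : nat -> C) l1 l2 :
  is_series a l1 -> is_series a l2 -> l1 = l2.
Proof. apply (filterlim_locally_unique (F := eventually) (sum_n a)). Qed.

Lemma sum_n_C_0 n : sum_n (fun _ : nat => (0 : C)) n = (0 : C).
Proof.
  induction n as [|n IH]; [now rewrite sum_O|].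
  rewrite sum_Sn, IH. apply Cplus_0_l.
Qed.

Lemma is_series_C_0 : is_series (fun _ : nat => (0 : C)) (0 : C).
Proof.
  apply (filterlim_ext (fun _ => (0 : C))); [|apply filterlim_const].
  intro n. symmetry. apply sum_n_C_0.
Qed.

Lemma sum_n_succ_front {G : AbelianMonoid} (a : nat -> G) n :
  sum_n a (S n) = plus (a O) (sum_n (fun i => a (S i)) n).
Proof. unfold sum_n. rewrite sum_Sn_m by lia. now rewrite sum_n_m_S. Qed.

Lemma cprod_succ_front (f : nat -> C) n :
  cprod f (S n) = f O * cprod (fun i => f (S i)) n.
Proof.
  induction n as [|n IH]; simpl in *; [ring|].
  rewrite IH. ring.
Qed.

Lemma cprod_ext (f g : nat -> C) n : (forall i, f i = g i) -> cprod f n = cprod g n.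
Proof. intro H. induction n as [|n IH]; simpl; [reflexivity|]. now rewrite IH, H. Qed.

Lemma cprod_neq_0 (f : nat -> C) n : (forall i, f i <> 0) -> cprod f n <> 0.
Proof.
  intro H. induction n as [|n IH]; simpl.
  - apply C1_neq_0.
  - now apply Cmult_neq_0.
Qed.

Lemma finite_upper_bound (f : nat -> R) n :
  exists M, forall k, (k <= n)%nat -> (f k <= M)%R.
Proof.
  induction n as [|n [M HM]].
  - exists (f O). intros k Hk. replace k with O by lia. lra.
  - exists (Rmax M (f (S n))). intros k Hk.
    destruct (Nat.eq_dec k (S n)) as [->|Hne]; [apply Rmax_r|].
    eapply Rle_trans; [apply HM; lia|apply Rmax_l].
Qed.

Section TwoTermRecurrence.

Variables (y g c : nat -> C) (m : nat).
Hypothesis c_vanish : forall k, (m < k)%nat -> c k = 0.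

Fixpoint tworec (j k : nat) : C :=
  match j with
  | O => c k
  | S j' => y k * tworec j' k + g k * tworec j' (S k)
  end.

Lemma tworec_vanish j : forall k, (m < k)%nat -> tworec j k = 0.
Proof.
  induction j as [|j IH]; intros k Hk; simpl.
  - now apply c_vanish.
  - rewrite !IH by lia. ring.
Qed.

Definition genfun_term (x : C) (k n : nat) : C :=
  c (k + n) * x ^ n * cprod (fun i => g (k + i)) n
  / cprod (fun i => 1 - x * y (k + i)) (S n).

Definition genfun_closed (x : C) (k : nat) : C := sum_n (genfun_term x k) m.

Lemma genfun_term_0 x k : genfun_term x k 0 = / (1 - x * y k) * c k.
Proof.
  unfold genfun_term, Cdiv. simpl.
  rewrite !Nat.add_0_r, !Cmult_1_l, !Cmult_1_r. apply Cmult_comm.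
Qed.

Lemma genfun_term_succ x k n :
  genfun_term x k (S n) = / (1 - x * y k) * (x * g k) * genfun_term x (S k) n.
Proof.
  unfold genfun_term, Cdiv.
  rewrite cprod_succ_front, (cprod_succ_front _ (S n)), Cinv_mult_distr.
  replace (k + S n)%nat with (S k + n)%nat by lia.
  rewrite !Nat.add_0_r. simpl Cpow.
  rewrite (cprod_ext (fun i => g (k + S i)) (fun i => g (S k + i)))
    by (intro i; f_equal; lia).
  rewrite (cprod_ext (fun i => 1 - x * y (k + S i)) (fun i => 1 - x * y (S k + i)))
    by (intro i; do 3 f_equal; lia).
  ring.
Qed.

Lemma genfun_term_vanish x k n : (m < k + n)%nat -> genfun_term x k n = 0.
Proof. intro H. unfold genfun_term. rewrite c_vanish by exact H. unfold Cdiv. ring. Qed.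

Lemma genfun_closed_vanish x k : (m < k)%nat -> genfun_closed x k = 0.
Proof.
  intro Hk. unfold genfun_closed.
  rewrite (sum_n_ext _ (fun _ => (0 : C))); [apply sum_n_C_0|].
  intro n. apply genfun_term_vanish. lia.
Qed.

Lemma genfun_closed_step x k :
  genfun_closed x k = / (1 - x * y k) * (c k + x * g k * genfun_closed x (S k)).
Proof.
  unfold genfun_closed.
  replace (sum_n (genfun_term x k) m) with (sum_n (genfun_term x k) (S m))
    by (rewrite sum_Sn, genfun_term_vanish by lia; apply Cplus_0_r).
  rewrite sum_n_succ_front, (sum_n_ext _ _ _ (genfun_term_succ x k)).
  change (genfun_term x k O
          + sum_n (fun n => mult (/ (1 - x * y k) * (x * g k)) (genfun_term x (S k) n)) m
          = / (1 - x * y k) * (c k + x * g k * sum_n (genfun_term x (S k)) m)).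
  rewrite sum_n_mult_l, genfun_term_0.
  change (mult (/ (1 - x * y k) * (x * g k)) (sum_n (genfun_term x (S k)) m))
    with (/ (1 - x * y k) * (x * g k) * sum_n (genfun_term x (S k)) m).
  ring.
Qed.

Variable B : R.
Hypothesis B_bound : forall k, (k <= m)%nat -> (Cmod (y k) + Cmod (g k) <= B)%R.

Lemma B_nonneg : (0 <= B)%R.
Proof.
  specialize (B_bound O ltac:(lia)).
  pose proof (Cmod_ge_0 (y O)). pose proof (Cmod_ge_0 (g O)). lra.
Qed.

Lemma tworec_bound (Cb : R) :
  (forall k, (k <= m)%nat -> Cmod (c k) <= Cb)%R ->
  forall j k, (Cmod (tworec j k) <= Cb * B ^ j)%R.
Proof.
  intro HC. pose proof B_nonneg.
  assert (Cb_ge0 : (0 <= Cb)%R).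
  { specialize (HC O ltac:(lia)). pose proof (Cmod_ge_0 (c O)). lra. }
  induction j as [|j IH]; intro k;
    (destruct (le_lt_dec k m) as [Hk|Hk];
     [|rewrite tworec_vanish, Cmod_0 by lia; apply Rmult_le_pos, pow_le; lra]).
  - simpl. rewrite Rmult_1_r. now apply HC.
  - simpl tworec. eapply Rle_trans; [apply Cmod_triangle|]. rewrite !Cmod_mult.
    pose proof (Cmod_ge_0 (y k)). pose proof (Cmod_ge_0 (g k)).
    apply Rle_trans with ((Cmod (y k) + Cmod (g k)) * (Cb * B ^ j))%R.
    + rewrite Rmult_plus_distr_r.
      apply Rplus_le_compat; apply Rmult_le_compat_l; auto.
    + replace (Cb * B ^ S j)%R with (B * (Cb * B ^ j))%R by (simpl; ring).
      apply Rmult_le_compat_r; [apply Rmult_le_pos, pow_le|]; auto.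
Qed.

Variable x : C.
Hypothesis x_small : (Cmod x * B < 1)%R.

Lemma genfun_ex_series k : ex_series (fun j => x ^ j * tworec j k).
Proof.
  destruct (finite_upper_bound (fun k => Cmod (c k)) m) as [Cb HC].
  assert (Hbound := tworec_bound Cb HC). pose proof B_nonneg.
  apply (@ex_series_le C_AbsRing C_CompleteNormedModule _
           (fun j => Cb * (Cmod x * B) ^ j)%R).
  - intro j. change (norm (x ^ j * tworec j k)) with (Cmod (x ^ j * tworec j k)).
    rewrite Cmod_mult, Cmod_pow, Rpow_mult_distr.
    pose proof (pow_le (Cmod x) j (Cmod_ge_0 x)).
    apply Rle_trans with (Cmod x ^ j * (Cb * B ^ j))%R;
      [apply Rmult_le_compat_l; auto | right; ring].
  - apply (ex_series_scal (V := R_NormedModule) Cb). apply ex_series_geom.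
    rewrite Rabs_pos_eq; [lra|]. apply Rmult_le_pos; [apply Cmod_ge_0|lra].
Qed.

Lemma genfun_is_series_step k :
  (k <= m)%nat ->
  is_series (fun j => x ^ j * tworec j (S k)) (genfun_closed x (S k)) ->
  is_series (fun j => x ^ j * tworec j k) (genfun_closed x k).
Proof.
  intros Hk HS.
  destruct (genfun_ex_series k) as [A HA]. change C in A.
  set (a := fun j => x ^ j * tworec j k) in *.
  set (b := fun j => x ^ j * tworec j (S k)) in *.
  assert (Ha_shift : is_series (fun j => a (S j)) (A - c k)).
  { apply is_series_incr_1. change (is_series a (A - c k + a O)).
    replace (A - c k + a O) with A; [exact HA|]. unfold a. simpl. ring. }
  assert (Ha_rec : is_series (fun j => a (S j)) (x * y k * A + x * g k * genfun_closed x (S k))).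
  { apply (is_series_ext (fun j => plus (scal (x * y k) (a j)) (scal (x * g k) (b j)))).
    - intro j. change (x * y k * a j + x * g k * b j = a (S j)).
      unfold a, b. simpl. ring.
    - apply (is_series_plus _ _ (scal (x * y k) A) (scal (x * g k) (genfun_closed x (S k))));
        now apply (is_series_scal (V := C_NormedModule)). }
  assert (HA_eq : A - c k = x * y k * A + x * g k * genfun_closed x (S k))
    by exact (is_series_C_unique _ _ _ Ha_shift Ha_rec).
  assert (Hden : 1 - x * y k <> 0).
  { intro E. apply Cminus_eq_0 in E.
    assert (Hmod : Cmod (x * y k) = 1%R) by (rewrite <- E; apply Cmod_1).
    rewrite Cmod_mult in Hmod.
    specialize (B_bound k Hk). pose proof (Cmod_ge_0 (g k)).
    pose proof (Rmult_le_compat_l (Cmod x) (Cmod (y k)) B (Cmod_ge_0 x) ltac:(lra)).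
    lra. }
  replace (genfun_closed x k) with A; [exact HA|].
  rewrite genfun_closed_step.
  replace (x * g k * genfun_closed x (S k)) with (A - c k - x * y k * A) by (rewrite HA_eq; ring).
  field. exact Hden.
Qed.

Lemma genfun_is_series_vanish k : (m < k)%nat ->
  is_series (fun j => x ^ j * tworec j k) (genfun_closed x k).
Proof.
  intro Hk. rewrite genfun_closed_vanish by exact Hk.
  apply (is_series_ext (fun _ => (0 : C))); [|exact is_series_C_0].
  intro j. rewrite tworec_vanish by exact Hk. symmetry. apply Cmult_0_r.
Qed.

Theorem genfun_is_series k :
  is_series (fun j => x ^ j * tworec j k) (genfun_closed x k).
Proof.
  enough (Hdown : forall d k, (m < d + k)%nat ->
            is_series (fun j => x ^ j * tworec j k) (genfun_closed x k))
    by (apply (Hdown (S m)); lia).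
  intro d. induction d as [|d IH]; intros k' Hk'.
  - apply genfun_is_series_vanish. lia.
  - destruct (le_lt_dec k' m) as [Hle|Hlt].
    + apply genfun_is_series_step; [exact Hle|]. apply IH. lia.
    + now apply genfun_is_series_vanish.
Qed.

End TwoTermRecurrence.

Fixpoint Qmonomial (n : nat) : list Q :=
  match n with
  | O => 1%Q :: nil
  | S n' => 0%Q :: Qmonomial n'
  end.

Lemma Qpoly_eval_monomial n z : Qpoly_eval (Qmonomial n) z = z ^ n.
Proof.
  induction n as [|n IH]; simpl.
  - replace (Q2R 1) with 1%R by (unfold Q2R; simpl; lra). ring.
  - rewrite IH. replace (Q2R 0) with 0%R by (unfold Q2R; simpl; lra). ring.
Qed.

Lemma transcendental_pow_neq_1 z n : transcendental z -> (1 <= n)%nat -> z ^ n <> 1.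
Proof.
  intros T Hn E. destruct n as [|n]; [lia|].
  (* z is a root of X^{n+1} - 1 *)
  apply (T ((-1)%Q :: Qmonomial n)).
  - exists 1%Q. split.
    + right. clear. induction n; simpl; auto.
    + intro H. compute in H. discriminate.
  - simpl. rewrite Qpoly_eval_monomial.
    replace (Q2R (-1)) with (-1)%R by (unfold Q2R; simpl; lra).
    simpl in E. rewrite E. apply injective_projections; simpl; ring.
Qed.

Lemma qpow_2nat L n : qpow L (2 * INR n) = cexp L ^ (2 * n).
Proof.
  replace (2 * RtoC (INR n)) with (RtoC (INR (2 * n)) * 1)
    by (rewrite mult_INR, RtoC_mult; simpl INR; rewrite RtoC_plus; ring).
  rewrite qpow_mult_nat. unfold qpow. now rewrite Cmult_1_l.
Qed.

Lemma qpow_2nat_neq_1 L n :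
  transcendental (cexp L) -> (1 <= n)%nat -> qpow L (2 * INR n) <> 1.
Proof. intros T Hn. rewrite qpow_2nat. apply transcendental_pow_neq_1; [exact T|lia]. Qed.

Lemma qpow_sub_opp_neq_0 L a : qpow L (2 * a) <> 1 -> qpow L a - qpow L (- a) <> 0.
Proof.
  intros Ha E. apply Ha. apply Cminus_eq_0 in E.
  replace (2 * a) with (a + a) by ring. rewrite qpow_add.
  rewrite E at 1. rewrite <- qpow_add, <- (qpow_0 L). f_equal. ring.
Qed.

Lemma qdenom_neq_0 L : transcendental (cexp L) -> qpow L 1 - qpow L (-1) <> 0.
Proof.
  intro T. replace (RtoC (-1)) with (- (1 : C)) by (apply injective_projections; simpl; ring).
  apply qpow_sub_opp_neq_0.
  replace (2 * 1) with (2 * RtoC (INR 1)) by (simpl; ring).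
  apply qpow_2nat_neq_1; [exact T|lia].
Qed.

Lemma qnum_neq_0 L a : transcendental (cexp L) -> qpow L (2 * a) <> 1 -> qnum L a <> 0.
Proof.
  intros T Ha E. apply (qpow_sub_opp_neq_0 L a Ha).
  assert (D := qdenom_neq_0 L T). unfold qnum in E.
  replace (qpow L a - qpow L (- a))
    with ((qpow L a - qpow L (- a)) / (qpow L 1 - qpow L (-1)) * (qpow L 1 - qpow L (-1)))
    by (field; exact D).
  rewrite E. ring.
Qed.

Lemma qnum_nat_neq_0 L n : transcendental (cexp L) -> (1 <= n)%nat -> qnum L (INR n) <> 0.
Proof. intros T Hn. apply qnum_neq_0; [exact T|]. now apply qpow_2nat_neq_1. Qed.

Lemma qnum_0 L : qnum L 0 = 0.
Proof. unfold qnum. replace (- 0) with (0 : C) by ring. unfold Cdiv. ring. Qed.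

Definition generic_weight (L mu : C) : Prop :=
  forall n : nat, qpow L (2 * mu) <> qpow L (2 * INR n).

Lemma qnum_generic_neq_0 L mu i :
  transcendental (cexp L) -> generic_weight L mu -> qnum L (mu - INR i) <> 0.
Proof.
  intros T G. apply qnum_neq_0; [exact T|]. intro E. apply (G i).
  replace (2 * mu) with (2 * (mu - INR i) + 2 * INR i) by ring.
  rewrite qpow_add, E. ring.
Qed.

Lemma generic_factor_neq_0 L mu i :
  generic_weight L mu -> 1 - qpow L (- 2 * mu + 2 * INR i) <> 0.
Proof.
  intros G E. apply (G i). apply Cminus_eq_0 in E.
  replace (2 * RtoC (INR i)) with (2 * mu + (- 2 * mu + 2 * INR i)) by ring.
  rewrite qpow_add, <- E. ring.
Qed.

Lemma qfall_succ L n l : qfall L (S n) (S l) = qnum L (INR n + 1) * qfall L n l.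
Proof.
  induction l as [|l IH].
  - change (qnum L (INR (S n) - INR 0) * 1 = qnum L (INR n + 1) * 1).
    rewrite S_INR, RtoC_plus. simpl INR. do 2 f_equal. ring.
  - change (qfall L (S n) (S (S l))) with (qnum L (INR (S n) - INR (S l)) * qfall L (S n) (S l)).
    rewrite IH. change (qfall L n (S l)) with (qnum L (INR n - INR l) * qfall L n l).
    replace (RtoC (INR (S n)) - INR (S l)) with (RtoC (INR n) - INR l)
      by (rewrite !S_INR, !RtoC_plus; ring).
    ring.
Qed.

Lemma qfall_vanish L n l : (n < l)%nat -> qfall L n l = 0.
Proof.
  induction l as [|l IH]; intro Hl; [lia|].
  change (qfall L n (S l)) with (qnum L (INR n - INR l) * qfall L n l).
  destruct (Nat.eq_dec l n) as [->|Hne].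
  - replace (RtoC (INR n) - INR n) with (0 : C) by ring. rewrite qnum_0. ring.
  - rewrite IH by lia. ring.
Qed.

Lemma qfall_diag_neq_0 L l : transcendental (cexp L) -> qfall L l l <> 0.
Proof.
  intro T. induction l as [|l IH]; [apply C1_neq_0|].
  rewrite qfall_succ. apply Cmult_neq_0; [|exact IH].
  replace (RtoC (INR l) + 1) with (RtoC (INR (S l))) by (rewrite S_INR, RtoC_plus; ring).
  apply qnum_nat_neq_0; [exact T|lia].
Qed.

Definition top_coef (L mu : C) (m l : nat) : C :=
  (-1) ^ l * qpow L (- (INR l * (INR l - 1) / 2)%R) * qfall L m l
  * (qpow L 1 - qpow L (-1)) ^ l
  * / (qfall L l l * cprod (fun i => 1 - qpow L (- 2 * mu + 2 * INR i)) l).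

Lemma top_coef_0 L mu m : top_coef L mu m 0 = 1.
Proof.
  unfold top_coef.
  replace (qpow L (- (INR 0 * (INR 0 - 1) / 2)%R)) with (1 : C)
    by (rewrite <- (qpow_0 L); f_equal; apply injective_projections; simpl; field).
  simpl. field.
Qed.

Lemma top_coef_vanish L mu m l : (m < l)%nat -> top_coef L mu m l = 0.
Proof. intro Hl. unfold top_coef. rewrite qfall_vanish by exact Hl. ring. Qed.

Lemma top_coef_succ L mu m l :
  transcendental (cexp L) -> generic_weight L mu ->
  top_coef L mu m (S l) * (qnum L (mu - INR l) * qnum L (INR l + 1))
  = - (qpow L (mu - 2 * INR l) * qnum L (INR m - INR l) * top_coef L mu m l).
Proof.
  intros T G. unfold top_coef.
  rewrite qfall_succ.
  change (qfall L m (S l)) with (qnum L (INR m - INR l) * qfall L m l).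
  change (cprod (fun i => 1 - qpow L (- 2 * mu + 2 * INR i)) (S l))
    with (cprod (fun i => 1 - qpow L (- 2 * mu + 2 * INR i)) l
          * (1 - qpow L (- 2 * mu + 2 * INR l))).
  replace (qpow L (- (INR (S l) * (INR (S l) - 1) / 2)%R))
    with (qpow L (- (INR l * (INR l - 1) / 2)%R) * qpow L (- INR l))
    by (rewrite <- qpow_add; f_equal; rewrite S_INR;
        apply injective_projections; simpl; field).
  set (P := qpow L (mu - INR l)).
  set (W := qpow L (- 2 * mu + 2 * INR l)).
  replace (qpow L (mu - 2 * INR l)) with (qpow L (- INR l) * P)
    by (unfold P; rewrite <- qpow_add; f_equal; ring).
  replace (qnum L (mu - INR l)) with ((P - P * W) / (qpow L 1 - qpow L (-1)))
    by (unfold qnum, P, W; rewrite <- qpow_add; do 3 f_equal; ring).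
  assert (D := qdenom_neq_0 L T).
  assert (Hfall := qfall_diag_neq_0 L l T).
  assert (Hprod := cprod_neq_0 _ l (fun i => generic_factor_neq_0 L mu i G)).
  assert (HW := generic_factor_neq_0 L mu l G). fold W in HW.
  assert (Hnum : qnum L (INR l + 1) <> 0).
  { replace (RtoC (INR l) + 1) with (RtoC (INR (S l))) by (rewrite S_INR, RtoC_plus; ring).
    apply qnum_nat_neq_0; [exact T|lia]. }
  simpl Cpow. field. repeat split; assumption.
Qed.

Section Intertwiner.

Variables (L mu : C) (m : nat) (Phi : vmap).
Hypothesis q_transcendental : transcendental (cexp L).
Hypothesis mu_generic : generic_weight L mu.
Hypothesis Phi_trig : is_Phi_w0_trig L mu m Phi.

Definition diag_y (k : nat) : C := qpow L (- 2 * INR k).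
Definition diag_g (k : nat) : C := qnum L (INR m + INR k + 1).

Lemma Phi_top_coef l : Phi O l (Z.of_nat l) = top_coef L mu m l.
Proof.
  destruct Phi_trig as [[_ [_ [He _]]] [H00 _]].
  induction l as [|l IH]; [simpl; now rewrite H00, top_coef_0|].
  (* the e-relation at v_mu, coefficient of f^l v_mu ⊗ w_{2l+2} *)
  specialize (He O l (Z.of_nat (S l))). unfold tensor_e in He. cbv beta iota in He.
  replace (Z.of_nat (S l) - 1)%Z with (Z.of_nat l) in He by lia.
  rewrite IH, <- INR_IZR_INZ in He.
  replace (RtoC (INR m) - (RtoC (INR (S l)) - 1)) with (RtoC (INR m) - INR l) in He
    by (rewrite S_INR, RtoC_plus; ring).
  set (ab := qnum L (mu - INR l) * qnum L (INR l + 1)) in *.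
  assert (Hab : ab <> 0).
  { apply Cmult_neq_0; [now apply qnum_generic_neq_0|].
    replace (RtoC (INR l) + 1) with (RtoC (INR (S l))) by (rewrite S_INR, RtoC_plus; ring).
    apply qnum_nat_neq_0; [exact q_transcendental|lia]. }
  set (X := Phi O (S l) (Z.of_nat (S l))) in *.
  assert (E : ab * X = top_coef L mu m (S l) * ab).
  { unfold ab. rewrite top_coef_succ by assumption. apply Cminus_eq_0.
    rewrite <- He. unfold ab. ring. }
  replace X with (/ ab * (ab * X)) by (field; exact Hab).
  rewrite E. field. exact Hab.
Qed.

Lemma Phi_diag_coef j k :
  Phi j (j + k)%nat (Z.of_nat k) = tworec diag_y diag_g (top_coef L mu m) j k.
Proof.
  destruct Phi_trig as [[_ [_ [_ Hf]]] _].
  revert k. induction j as [|j IH]; intro k; [apply Phi_top_coef|].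
  (* the f-relation, coefficient of f^{j+k+1} v_mu ⊗ w_{2k} *)
  rewrite <- Hf. unfold tensor_f. change (S j + k)%nat with (S (j + k)).
  rewrite <- INR_IZR_INZ.
  replace (Z.of_nat k + 1)%Z with (Z.of_nat (S k)) by lia.
  replace (S (j + k)) with (j + S k)%nat by lia.
  rewrite !IH. reflexivity.
Qed.

Lemma trace_term_diag lam j :
  trace_term L mu lam Phi j
  = qpow L (lam * mu) * (qpow L (- 2 * lam) ^ j * tworec diag_y diag_g (top_coef L mu m) j 0).
Proof.
  unfold trace_term.
  replace (Phi j j 0%Z) with (Phi j (j + 0)%nat (Z.of_nat 0)) by now rewrite Nat.add_0_r.
  rewrite Phi_diag_coef.
  rewrite <- qpow_mult_nat, Cmult_assoc, <- qpow_add. f_equal. f_equal. ring.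
Qed.

Lemma cprod_diag_g l : cprod diag_g l = qfall L (m + l) l.
Proof.
  induction l as [|l IH]; [reflexivity|].
  change (cprod diag_g (S l)) with (cprod diag_g l * diag_g l). rewrite IH.
  replace (m + S l)%nat with (S (m + l)) by lia.
  rewrite qfall_succ. unfold diag_g. rewrite plus_INR, RtoC_plus. ring.
Qed.

Lemma trace_formula_genfun lam :
  trace_formula L mu lam m
  = qpow L (lam * mu)
    * genfun_closed diag_y diag_g (top_coef L mu m) m (qpow L (- 2 * lam)) 0.
Proof.
  unfold trace_formula, genfun_closed. f_equal. apply sum_n_ext. intro l.
  unfold genfun_term.
  match goal with |- ?a = ?b => change (@eq C a b) end.
  cbn [Nat.add]. rewrite cprod_diag_g.
  rewrite (cprod_ext (fun i => 1 - qpow L (- 2 * lam) * diag_y i)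
                     (fun i => 1 - qpow L (- 2 * lam - 2 * INR i)))
    by (intro i; unfold diag_y; rewrite <- qpow_add; do 2 f_equal; ring).
  replace (qpow L (- 2 * lam * INR l)) with (qpow L (- 2 * lam) ^ l)
    by (rewrite <- qpow_mult_nat; f_equal; ring).
  unfold top_coef, Cdiv. rewrite !Cinv_mult_distr. ring.
Qed.

End Intertwiner.

Theorem proposition7p2 (L : C) (m : nat) (mu : C) (Phi : vmap) :
  transcendental (cexp L) ->
  (* mu generic: M_mu irreducible, i.e. q^{2 mu} <> q^{2n} for all n >= 0 *)
  (forall n : nat, qpow L (2 * mu) <> qpow L (2 * INR n)) ->
  is_Phi_w0_trig L mu m Phi ->
  exists eps : R, (0 < eps)%R /\
    forall lam : C, (Cmod (qpow L (- 2 * lam)) < eps)%R ->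
      is_series (trace_term L mu lam Phi) (trace_formula L mu lam m).
Proof.
  intros T G HPhi.
  destruct (finite_upper_bound (fun k => Cmod (diag_y L k) + Cmod (diag_g L m k))%R m)
    as [B HB].
  pose proof (B_nonneg _ _ _ _ HB).
  exists (/ (B + 1))%R. split; [apply Rinv_0_lt_compat; lra|].
  intros lam Hlam.
  assert (Hx : (Cmod (qpow L (- 2 * lam)) * B < 1)%R).
  { apply Rmult_lt_compat_r with (r := (B + 1)%R) in Hlam; [|lra].
    rewrite Rinv_l in Hlam by lra. pose proof (Cmod_ge_0 (qpow L (- 2 * lam))). nra. }
  apply (is_series_ext (fun j => scal (qpow L (lam * mu))
           (qpow L (- 2 * lam) ^ j * tworec (diag_y L) (diag_g L m) (top_coef L mu m) j 0))).
  - intro j. symmetry. now apply trace_term_diag.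
  - rewrite trace_formula_genfun. apply (is_series_scal (V := C_NormedModule)).
    apply (genfun_is_series _ _ _ m (top_coef_vanish L mu m) B); assumption.
Qed.
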